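(* Let $X$ be a compact Hausdorff space and $\phi_1,\dots,\phi_m$ real-valued continuous functions on $X$. Let $\mathcal C(X,1,\boldsymbol\phi)$ be the set of positive scalar Borel measures $\mu$ on $X$ with $\mu(X)=1$ and $\int_X\phi_i\,d\mu=0$ for $i=1,\dots,m$. Suppose $\mu=\sum_{j=1}^n w_j\delta_{x_j}$ where $1\le n\le m+1$, $x_1,\dots,x_n$ are distinct points of $X$, and the real numbers $w_j$ satisfy $w_j>0$, $\sum_{j=1}^nw_j=1$, and $\sum_{j=1}^n\phi_i(x_j)w_j=0$ for $i=1,\dots,m$. Write $\boldsymbol\phi(x_j)=(\phi_1(x_j),\dots,\phi_m(x_j))^{T}\in\mathbb{R}^m$. Then $\mu$ is an extreme point of $\mathcal C(X,1,\boldsymbol\phi)$ if and only if $0=\sum_{j=1}^nw_j\boldsymbol\phi(x_j)$ is an interior point of the convex hull of $\{\boldsymbol\phi(x_1),\dots,\boldsymbol\phi(x_n)\}$ in $\mathbb{R}^m$.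
   Context: $\delta_x$ denotes the unit point-mass at $x$. A vector $v$ is an interior point of the convex hull of $\{u_1,\dots,u_n\}\subset\mathbb R^m$ if $v=\sum_j\lambda_ju_j$ with $\lambda_j>0$, $\sum_j\lambda_j=1$, and the coefficients $\lambda_1,\dots,\lambda_n$ are uniquely determined by these conditions. *)

From HB Require Import structures.
From mathcomp Require Import all_boot all_order all_algebra.
From mathcomp Require Import all_classical all_reals all_analysis.
Set Implicit Arguments. Unset Strict Implicit. Unset Printing Implicit Defensive.
Import Order.TTheory GRing.Theory Num.Theory.
Local Open Scope classical_set_scope.
Local Open Scope ring_scope.

Definition Borel (X : ptopologicalType) := g_sigma_algebraType (@open X).

Definition Cset (R : realType) (X : ptopologicalType) (m : nat)
    (phi : 'I_m -> X -> R) (mu : {measure set (Borel X) -> \bar R}) : Prop :=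
  mu setT = 1%E /\ forall i : 'I_m, (\int[mu]_x (phi i x)%:E = 0)%E.

(* Extreme point of a convex set P of measures (measures are identified
   when they agree on all measurable sets). *)
Definition extreme_measure (R : realType) (X : ptopologicalType)
    (P : {measure set (Borel X) -> \bar R} -> Prop)
    (mu : {measure set (Borel X) -> \bar R}) : Prop :=
  P mu /\
  forall (nu1 nu2 : {measure set (Borel X) -> \bar R}) (t : R),
    P nu1 -> P nu2 -> 0 < t < 1 ->
    (forall A : set (Borel X), measurable A ->
       mu A = (t%:E * nu1 A + (1 - t)%:E * nu2 A)%E) ->
    forall A : set (Borel X), measurable A -> nu1 A = nu2 A.

Definition interior_conv_point (R : realType) (m n : nat)
    (v : 'rV[R]_m) (u : 'I_n -> 'rV[R]_m) : Prop :=
  exists lam : 'I_n -> R,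
    [/\ forall j, 0 < lam j,
        \sum_(j < n) lam j = 1,
        v = \sum_(j < n) lam j *: u j &
        forall lam' : 'I_n -> R,
          (forall j, 0 < lam' j) -> \sum_(j < n) lam' j = 1 ->
          v = \sum_(j < n) lam' j *: u j -> forall j, lam' j = lam j].

From HB Require Import structures.
From mathcomp Require Import all_boot all_order all_algebra.
From mathcomp Require Import all_classical all_reals all_analysis.
From mathcomp Require Import measurable_realfun.
From mathcomp Require Import ring lra.
Set Implicit Arguments.
Unset Strict Implicit.
Unset Printing Implicit Defensive.
Import Order.TTheory GRing.Theory Num.Theory numFieldNormedType.Exports.
Local Open Scope classical_set_scope.
Local Open Scope ring_scope.

(* A measure in
   C(X,1,phi) that vanishes off the atoms [x j] is the discrete measure with
   some weights [a] summing to 1 and annihilating the vectors phi(x j);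
   averaging [a] with [w] gives positive such weights, so if [w] is the only
   one, every decomposition of [mu] inside C(X,1,phi) is trivial.
   Conversely, any other positive admissible [l] gives [w = t l + (1 - t) b]
   with [t] small and [b] admissible and nonnegative, and extremality of
   [mu] forces [l = b], whence [l = w]. *)

Section DiscreteMeasure.
Context d (T : measurableType d) (R : realType) (n : nat) (x : 'I_n -> T).

(* [msum] sums measures indexed by [nat]; indices [k >= n] contribute zero. *)
Definition weighted_dirac {a : 'I_n -> R} (a_ge0 : forall j, 0 <= a j) (k : nat)
    : {measure set T -> \bar R} :=
  if insub k is Some j then mscale (NngNum (a_ge0 j)) \d_(x j) else mzero.

Definition discrete_measure {a : 'I_n -> R} (a_ge0 : forall j, 0 <= a j)
    : {measure set T -> \bar R} :=
  msum (weighted_dirac a_ge0) n.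

Variables (a : 'I_n -> R) (a_ge0 : forall j, 0 <= a j).
Local Notation nu := (discrete_measure a_ge0).

Lemma discrete_measureE A : nu A = (\sum_(j < n) (a j)%:E * \d_(x j) A)%E.
Proof. by apply: eq_bigr => j _; rewrite /weighted_dirac valK. Qed.

Lemma discrete_measureT : nu setT = (\sum_(j < n) a j)%:E.
Proof.
rewrite discrete_measureE -sumEFin; apply: eq_bigr => j _.
by rewrite diracE in_setT mule1.
Qed.

Lemma ge0_integral_discrete_measure (g : T -> \bar R) :
  (forall y, 0 <= g y)%E -> measurable_fun setT g ->
  (\int[nu]_y g y = \sum_(j < n) (a j)%:E * g (x j))%E.
Proof.
move=> g_ge0 mg; rewrite ge0_integral_measure_sum//; apply: eq_bigr => j _.
rewrite /weighted_dirac valK ge0_integral_mscale// integral_dirac//.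
by rewrite diracE in_setT mul1e.
Qed.

Lemma integral_discrete_measure (f : T -> R) : measurable_fun setT f ->
  (\int[nu]_y (f y)%:E = (\sum_(j < n) a j * f (x j))%:E)%E.
Proof.
move=> /measurable_EFinP mf.
rewrite integralE !ge0_integral_discrete_measure//;
  [|exact: measurable_funeneg|exact: measurable_funepos].
rewrite (eq_bigr (fun j => (a j * Num.max (f (x j)) 0)%:E)); last first.
  by move=> j _; rewrite funeposE -EFin_max EFinM.
rewrite [X in (_ - X)%E](eq_bigr (fun j => (a j * Num.max (- f (x j)) 0)%:E));
  last first.
  by move=> j _; rewrite funenegE -EFin_max EFinM.
rewrite !sumEFin -EFinB -sumrB; congr (_%:E); apply: eq_bigr => j _.
rewrite -mulrBr; congr (_ * _).
have [f_ge0|f_lt0] := lerP 0 (f (x j)).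
  by rewrite (max_idPr _) ?subr0 // oppr_le0.
by rewrite (max_idPl _) ?sub0r ?opprK // oppr_ge0 ltW.
Qed.

End DiscreteMeasure.

Arguments discrete_measure {d T R n} x {a} a_ge0.

Lemma discrete_measure_combination d (T : measurableType d) (R : realType)
    (n : nat) (x : 'I_n -> T) (t : R) (a b c : 'I_n -> R)
    (a_ge0 : forall j, 0 <= a j) (b_ge0 : forall j, 0 <= b j)
    (c_ge0 : forall j, 0 <= c j) :
  (forall j, c j = t * a j + (1 - t) * b j) -> forall A,
  discrete_measure x c_ge0 A =
    (t%:E * discrete_measure x a_ge0 A
     + (1 - t)%:E * discrete_measure x b_ge0 A)%E.
Proof.
move=> cE A; rewrite !discrete_measureE.
have sumE (e : 'I_n -> R) : (\sum_(j < n) (e j)%:E * \d_(x j) A =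
    (\sum_(j < n) e j * (x j \in A)%:R)%:E)%E.
  by rewrite -sumEFin; apply: eq_bigr => j _; rewrite diracE.
rewrite !sumE -!EFinM -EFinD !mulr_sumr -big_split; congr (_%:E).
by apply: eq_bigr => j _ /=; rewrite cE; ring.
Qed.

Section Atoms.
Context d (T : measurableType d) (R : realType) (n : nat) (x : 'I_n -> T).
Hypothesis x_inj : injective x.
Hypothesis measurable_x : forall j, measurable [set x j].

Definition atoms : set T := \big[setU/set0]_(j < n) [set x j].

Lemma atoms_x j : atoms (x j).
Proof. by rewrite /atoms (bigD1 j) //=; left. Qed.

Lemma measurable_atoms : measurable atoms.
Proof. exact: bigsetU_measurable. Qed.

Lemma discrete_measure_set1 (a : 'I_n -> R) (a_ge0 : forall j, 0 <= a j) k :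
  discrete_measure x a_ge0 [set x k] = (a k)%:E.
Proof.
rewrite discrete_measureE (bigD1 k) //= diracE mem_set // mule1 big1 ?adde0 //.
move=> j jk; rewrite diracE memNset ?mule0 // => /x_inj /eqP.
by rewrite (negbTE jk).
Qed.

Lemma discrete_measure_atomsC (a : 'I_n -> R) (a_ge0 : forall j, 0 <= a j) :
  discrete_measure x a_ge0 (~` atoms) = 0%E.
Proof.
rewrite discrete_measureE big1 // => j _;
by rewrite diracE memNset ?mule0 //; apply; exact: atoms_x.
Qed.

Lemma concentrated_measureE (nu : {measure set T -> \bar R}) :
  nu (~` atoms) = 0%E -> forall A, measurable A ->
  nu A = (\sum_(j < n) nu [set x j] * \d_(x j) A)%E.
Proof.
move=> nu0 A mA.
rewrite (measureDI nu mA measurable_atoms) [X in (X + _)%E](_ : _ = 0%E) ?add0e.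
  rewrite /atoms big_distrr /= measure_bigsetU_ord.
  - apply: eq_bigr => j _; rewrite setI1 diracE.
    by case: ifP; rewrite ?mule1 ?measure0 ?mule0.
  - by move=> j; apply: measurableI.
  by move=> i j _ _ [y [[_ /= ->] [_ /= /x_inj]]].
apply/eqP; rewrite -measure_le0 -nu0; apply: le_measure; rewrite ?inE.
- exact: measurableD measurable_atoms.
- exact: measurableC measurable_atoms.
by move=> y [].
Qed.

Lemma concentrated_discrete_measure (nu : {measure set T -> \bar R}) :
  (nu setT < +oo)%E -> nu (~` atoms) = 0%E ->
  exists a (a_ge0 : forall j, 0 <= a j),
    forall A, measurable A -> nu A = discrete_measure x a_ge0 A.
Proof.
move=> nuT nu0; pose a j := fine (nu [set x j]).
have nu_set1 j : nu [set x j] = (a j)%:E.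
  rewrite fineK // ge0_fin_numE ?measure_ge0 //.
  by apply: le_lt_trans nuT; apply: le_measure; rewrite ?inE.
have a_ge0 j : 0 <= a j by rewrite fine_ge0 ?measure_ge0.
exists a, a_ge0 => A mA; rewrite concentrated_measureE // discrete_measureE.
by apply: eq_bigr => j _; rewrite nu_set1.
Qed.

End Atoms.

Lemma Borel_measurable_open (X : ptopologicalType) (A : set X) :
  open A -> measurable (A : set (Borel X)).
Proof. exact: sub_sigma_algebra. Qed.

Lemma Borel_measurable_set1 (X : ptopologicalType) (hX : hausdorff_space X)
    (y : X) :
  measurable ([set y] : set (Borel X)).
Proof.
have y_closed : closed [set y].
  exact: @accessible_closed_set1 _ (hausdorff_accessible hX) y.
rewrite -[X in measurable X]setCK; apply: measurableC.
apply: Borel_measurable_open.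
exact: closed_openC.
Qed.

Lemma Borel_measurable_continuous (R : realType) (X : ptopologicalType)
    (f : X -> R) :
  continuous f -> measurable_fun [set: Borel X] (f : Borel X -> R).
Proof.
move=> /continuousP f_cont; apply: (measurability _ (RGenOpens.measurableE R)).
move=> _ [_ [a [b ->]] <-]; rewrite setTI; apply: Borel_measurable_open.
exact/f_cont/interval_open.
Qed.

Lemma sum_scale_rows_eq0 (R : pzRingType) (m n : nat) (c : 'I_m -> 'I_n -> R)
    (a : 'I_n -> R) :
  \sum_(j < n) a j *: \row_(i < m) c i j = 0 <->
  forall i, \sum_(j < n) a j * c i j = 0.
Proof.
have sumE i :
    (\sum_(j < n) a j *: \row_(i < m) c i j) 0 i = \sum_(j < n) a j * c i j.
  by rewrite summxE; apply: eq_bigr => j _; rewrite !mxE.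
split=> [a0 i|a0]; first by rewrite -sumE a0 mxE.
by apply/rowP => i; rewrite sumE a0 mxE.
Qed.

Lemma scale_lt_weights (R : realFieldType) (n : nat) (w l : 'I_n -> R) :
  (forall j, 0 < w j) -> exists2 t, 0 < t < 1 & forall j, t * l j < w j.
Proof.
move=> w_gt0; pose s := \sum_(j < n) `|l j| / w j.
have s_ge0 : 0 <= s by apply: sumr_ge0 => j _; rewrite divr_ge0 // ltW.
have l_le j : l j <= s * w j.
  have : `|l j| / w j <= s.
    rewrite /s (bigD1 j) //= lerDl; apply: sumr_ge0 => k _.
    by rewrite divr_ge0 // ltW.
  by rewrite ler_pdivrMr // => /(le_trans (ler_norm _)).
have t_inv : (2 + s)^-1 * (2 + s) = 1 by rewrite mulVf // gt_eqF //; lra.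
have t_gt0 : 0 < (2 + s)^-1 by rewrite invr_gt0; lra.
exists (2 + s)^-1; first by apply/andP; split; nra.
move=> j; have := w_gt0 j; have := l_le j; nra.
Qed.

Section ZeroCombination.
Context (R : realType) (m n : nat) (u : 'I_n -> 'rV[R]_m).

Definition zero_combination (a : 'I_n -> R) : Prop :=
  \sum_(j < n) a j = 1 /\ \sum_(j < n) a j *: u j = 0.

Lemma zero_combination_affine (s : R) (a b : 'I_n -> R) :
  zero_combination a -> zero_combination b ->
  zero_combination (fun j => s * a j + (1 - s) * b j).
Proof.
move=> [a1 a0] [b1 b0]; split.
  by rewrite big_split /= -!mulr_sumr a1 b1; ring.
rewrite (eq_bigr (fun j => s *: (a j *: u j) + (1 - s) *: (b j *: u j))).
  by rewrite big_split /= -!scaler_sumr a0 b0 !scaler0 addr0.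
by move=> j _; rewrite scalerDl !scalerA.
Qed.

Lemma interior_conv_point0P (w : 'I_n -> R) :
  (forall j, 0 < w j) -> zero_combination w ->
  interior_conv_point 0 u <->
  forall l, (forall j, 0 < l j) -> zero_combination l -> l =1 w.
Proof.
move=> w_gt0 [w1 w0]; split.
  move=> [lam [_ _ _ lam_unique]] l l_gt0 [l1 l0] j.
  by rewrite (lam_unique l) ?l0 // (lam_unique w) ?w0.
by move=> w_unique; exists w; split=> // l l_gt0 l1 l0; apply: w_unique.
Qed.

Lemma zero_combination_split (w l : 'I_n -> R) :
  (forall j, 0 < w j) -> zero_combination w -> zero_combination l ->
  exists t b, [/\ 0 < t < 1, forall j, 0 <= b j, zero_combination b
                & forall j, w j = t * l j + (1 - t) * b j].
Proof.
move=> w_gt0 w_zc l_zc.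
have [t /andP[t_gt0 t_lt1] tl_lt] := scale_lt_weights l w_gt0.
have t1_neq0 : 1 - t != 0 by rewrite subr_eq0 eq_sym lt_eqF.
pose b j := (1 - t)^-1 * w j + (1 - (1 - t)^-1) * l j.
have bE j : (1 - t) * b j = w j - t * l j by rewrite /b; field.
exists t, b; split.
- by apply/andP.
- move=> j; have := bE j; have := tl_lt j; nra.
- exact: zero_combination_affine.
by move=> j; rewrite bE; ring.
Qed.

End ZeroCombination.

Lemma eq_measure_Cset (R : realType) (X : ptopologicalType) (m : nat)
    (phi : 'I_m -> X -> R)
    (nu nu' : {measure set (Borel X) -> \bar R}) :
  (forall A, measurable A -> nu A = nu' A) -> Cset phi nu -> Cset phi nu'.
Proof.
move=> nuE [nuT nu_mom]; split; first by rewrite -nuE.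
by move=> i; rewrite (eq_measure_integral nu) // => A mA _; rewrite nuE.
Qed.

Section ExtremeDiscrete.
Context (R : realType) (X : ptopologicalType) (hX : hausdorff_space X).
Context (m n : nat) (phi : 'I_m -> X -> R).
Context (phi_cont : forall i, continuous (phi i)).
Context (x : 'I_n -> X) (x_inj : injective x).

Local Notation dmeasure := (discrete_measure (x : 'I_n -> Borel X)).

Let moment j : 'rV[R]_m := \row_(i < m) phi i (x j).

Let measurable_x j : measurable ([set x j] : set (Borel X)).
Proof. exact: Borel_measurable_set1. Qed.

Lemma Cset_discrete_measure (a : 'I_n -> R) (a_ge0 : forall j, 0 <= a j) :
  Cset phi (dmeasure a_ge0) <-> zero_combination moment a.
Proof.
have momentE i : (\int[dmeasure a_ge0]_y (phi i y)%:E =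
    (\sum_(j < n) a j * phi i (x j))%:E)%E.
  by apply: integral_discrete_measure; apply: Borel_measurable_continuous.
rewrite /Cset /zero_combination discrete_measureT sum_scale_rows_eq0.
split=> -[aT a_mom]; split.
- by case: aT.
- by move=> i; have := a_mom i; rewrite momentE => -[].
- by rewrite aT.
- by move=> i; rewrite momentE a_mom.
Qed.

Variables (w : 'I_n -> R) (w_gt0 : forall j, 0 < w j).
Let w_ge0 j : 0 <= w j := ltW (w_gt0 j).
Hypothesis w_zc : zero_combination moment w.
Variable mu : {measure set (Borel X) -> \bar R}.
Hypothesis muE : forall A, measurable A -> mu A = dmeasure w_ge0 A.

Lemma extreme_unique_weights : extreme_measure (Cset phi) mu ->
  forall l, (forall j, 0 < l j) -> zero_combination moment l -> l =1 w.
Proof.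
move=> [_ mu_extreme] l l_gt0 l_zc j.
have l_ge0 k : 0 <= l k := ltW (l_gt0 k).
have [t [b [t01 b_ge0 b_zc wE]]] := zero_combination_split w_gt0 w_zc l_zc.
have mu_mix A : measurable A -> mu A =
    (t%:E * dmeasure l_ge0 A + (1 - t)%:E * dmeasure b_ge0 A)%E.
  by move=> mA; rewrite muE //; apply: discrete_measure_combination.
have := mu_extreme _ _ t ((Cset_discrete_measure l_ge0).2 l_zc)
  ((Cset_discrete_measure b_ge0).2 b_zc) t01 mu_mix _ (measurable_x j).
rewrite !discrete_measure_set1 // => -[lb].
by rewrite wE -lb; ring.
Qed.

Lemma unique_weights_extreme :
  (forall l, (forall j, 0 < l j) -> zero_combination moment l -> l =1 w) ->
  extreme_measure (Cset phi) mu.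
Proof.
move=> w_unique.
have measurable_atomsC : measurable (~` atoms (x : 'I_n -> Borel X)).
  exact/measurableC/measurable_atoms.
have nu_mu (nu : {measure set (Borel X) -> \bar R}) : Cset phi nu ->
    nu (~` atoms (x : 'I_n -> Borel X)) = 0%E ->
    forall A, measurable A -> nu A = mu A.
  move=> nuC nu0 A mA; have nuT : (nu setT < +oo)%E by rewrite nuC.1 ltry.
  have [a [a_ge0 nuE]] :=
    concentrated_discrete_measure (T := Borel X) x_inj measurable_x nuT nu0.
  have a_zc : zero_combination moment a.
    by apply/Cset_discrete_measure; apply: eq_measure_Cset nuC.
  have aw j : a j = w j.
    have avg_gt0 k : 0 < 2^-1 * w k + (1 - 2^-1) * a k.
      by have := w_gt0 k; have := a_ge0 k; lra.
    have := w_unique _ avg_gt0 (zero_combination_affine 2^-1 w_zc a_zc) j.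
    lra.
  by rewrite nuE // muE // !discrete_measureE; apply: eq_bigr => j _; rewrite aw.
split.
  apply: eq_measure_Cset (fun A mA => esym (muE mA)) _.
  exact/Cset_discrete_measure.
move=> nu1 nu2 t nu1C nu2C /andP[t_gt0 t_lt1] mu_mix A mA.
(* [mu] vanishes off the atoms, hence so do [nu1] and [nu2]. *)
have := mu_mix _ measurable_atomsC.
rewrite muE // discrete_measure_atomsC // => /esym/eqP.
rewrite padde_eq0 ?mule_ge0 ?lee_fin ?measure_ge0 ?(ltW t_gt0) ?subr_ge0
  ?(ltW t_lt1) //.
rewrite !mule_eq0 !eqe (gt_eqF t_gt0) subr_eq0 (gt_eqF t_lt1) /=.
by move=> /andP[/eqP nu10 /eqP nu20]; rewrite nu_mu // nu_mu.
Qed.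

End ExtremeDiscrete.

Theorem theorem3p3 (R : realType) (X : ptopologicalType)
    (hX : hausdorff_space X) (cX : compact [set: X])
    (m n : nat) (phi : 'I_m -> X -> R)
    (cphi : forall i : 'I_m, continuous (phi i))
    (hn1 : (1 <= n)%N) (hnm : (n <= m.+1)%N)
    (x : 'I_n -> X) (xinj : injective x) (w : 'I_n -> R)
    (wpos : forall j, 0 < w j) (wsum : \sum_(j < n) w j = 1)
    (wmom : forall i : 'I_m, \sum_(j < n) phi i (x j) * w j = 0)
    (mu : {measure set (Borel X) -> \bar R})
    (hmu : forall A : set (Borel X), measurable A ->
       mu A = (\sum_(j < n) (w j)%:E * @dirac _ (Borel X) (x j) R A)%E) :
  extreme_measure (Cset phi) mu <->
  interior_conv_point 0 (fun j => \row_(i < m) phi i (x j)).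
Proof.
have w_zc : zero_combination (fun j => \row_(i < m) phi i (x j)) w.
  split=> //; apply/sum_scale_rows_eq0 => i.
  by rewrite -[RHS](wmom i); apply: eq_bigr => j _; rewrite mulrC.
have muE A : measurable A ->
    mu A = discrete_measure (x : 'I_n -> Borel X) (fun j => ltW (wpos j)) A.
  by move=> mA; rewrite hmu // discrete_measureE.
rewrite (interior_conv_point0P wpos w_zc); split.
- exact: extreme_unique_weights muE.
- exact: unique_weights_extreme muE.
Qed.
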